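(* There exist a positive integer $N$ and a doubly-stochastic $N\times N$ matrix $A$ such that $$\mathrm{per}(A)\ <\ LMS(A):=\prod_{1\le i\le N}\ \sum_{1\le j\le N}A(i,j)\prod_{k\ne i}\bigl(1-A(k,j)\bigr).$$
   Context: A doubly-stochastic matrix is an entrywise non-negative square matrix all of whose row and column sums equal $1$; $\mathrm{per}$ is the permanent. (This disproves the conjecture that $\mathrm{per}(A)\ge LMS(A)$ for all doubly-stochastic $A$.) *)

From HB Require Import structures.
From mathcomp Require Import all_boot all_order all_algebra all_fingroup.
From Stdlib Require Import Reals.
From mathcomp Require Import Rstruct.
Set Implicit Arguments. Unset Strict Implicit. Unset Printing Implicit Defensive.
Import Order.TTheory GRing.Theory Num.Theory.
Local Open Scope ring_scope.

Definition per (T : comNzRingType) (n : nat) (A : 'M[T]_n) : T :=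
  \sum_(s : 'S_n) \prod_(i < n) A i (s i).

Definition doubly_stochastic (T : numDomainType) (n : nat) (A : 'M[T]_n) : Prop :=
  (forall i j, 0 <= A i j) /\
  (forall i, \sum_(j < n) A i j = 1) /\
  (forall j, \sum_(i < n) A i j = 1).

Definition LMS (T : comNzRingType) (n : nat) (A : 'M[T]_n) : T :=
  \prod_(i < n) \sum_(j < n) (A i j * \prod_(k < n | k != i) (1 - A k j)).

(* Take N = 2m and let A have the block form [I/2, c J; I/2, c J] with c = 1/(2m)
   and J the all-ones m x m matrix.  Expanding the permanent along columns, the right
   block contributes exactly c^m and, once a permutation's values on the left columns
   are fixed, at most m! completions remain; the left column sums are 1, so
   per A <= m! c^m.  In LMS, each row gets at least 1/4 from its entry 1/2, because
   prod_(k <> i) (1 - A k j) >= 1 - sum_(k <> i) A k j = A i j (Weierstrass), and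
   exactly (1/2)(1 - c)^(2m-1), about 1/(2e), from the right block.  For m = 150,
   per A <= 150!/300^150 < 0.4339^300 <= LMS A. *)

From mathcomp Require Import all_boot all_order all_algebra all_fingroup.
From Stdlib Require Import Reals.
From mathcomp Require Import Rstruct.
From mathcomp Require Import ring lra.
Set Implicit Arguments.
Unset Strict Implicit.
Unset Printing Implicit Defensive.
Import Order.TTheory GRing.Theory Num.Theory.
Local Open Scope ring_scope.

Lemma card_perm_lshift_fiber m n (f : {ffun 'I_m -> 'I_(m + n)}) :
  leq #|[pred t : 'S_(m + n) | [ffun j => t (lshift n j)] == f]| n`!.
Proof.
set P := [pred t : 'S_(m + n) | _].
have [t0 Pt0 | P0] := pickP P; last by rewrite eq_card0.
set L := [set lshift n j | j : 'I_m].
have cardCL : #|~: L| = n.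
  have := cardsC L; rewrite card_imset; last exact: lshift_inj.
  by rewrite !card_ord => /eqP; rewrite eqn_add2l => /eqP.
apply: (@leq_trans #|[set (s * t0)%g | s in perm_on (~: L)]|).
  apply/subset_leq_card/subsetP => t Pt; apply/imsetP.
  exists (t * t0^-1)%g; last by rewrite -mulgA mulVg mulg1.
  apply/subsetP => x; rewrite !inE permM; apply: contraNN => /imsetP[j _ ->].
  move: Pt Pt0; rewrite !inE => /eqP <- /eqP /ffunP /(_ j).
  by rewrite !ffunE => <-; rewrite permK.
by rewrite (leq_trans (leq_imset_card _ _)) // card_perm cardCL.
Qed.

Lemma per_colE (T : comNzRingType) n (A : 'M[T]_n) :
  per A = \sum_(t : 'S_n) \prod_j A (t j) j.
Proof.
rewrite /per [RHS](reindex_inj invg_inj); apply: eq_bigr => s _ /=.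
by rewrite [RHS](reindex_inj (@perm_inj _ s)); apply: eq_bigr => i _; rewrite permK.
Qed.

Lemma per_le_const_rblock (F : realFieldType) m n (A : 'M[F]_(m + n)) (c : F) :
  0 <= c -> (forall i j, 0 <= A i j) -> (forall i j, A i (rshift m j) = c) ->
  per A <= n`!%:R * c ^+ n * \prod_(j < m) \sum_i A i (lshift n j).
Proof.
move=> c_ge0 A_ge0 Ac; rewrite per_colE.
pose G (f : {ffun 'I_m -> 'I_(m + n)}) := \prod_(j < m) A (f j) (lshift n j).
have G_ge0 f : 0 <= G f by apply: prodr_ge0.
have splitE (t : 'S_(m + n)) :
    \prod_j A (t j) j = G [ffun j => t (lshift n j)] * c ^+ n.
  rewrite big_split_ord /=; congr (_ * _).
    by apply: eq_bigr => j _; rewrite ffunE.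
  by rewrite (eq_bigr (fun=> c)) ?prodr_const ?card_ord // => j _; rewrite Ac.
rewrite (eq_bigr _ (fun t _ => splitE t)) -mulr_suml mulrAC.
apply: ler_wpM2r; first exact: exprn_ge0.
rewrite bigA_distr_bigA /= mulr_sumr.
rewrite (partition_big (fun t : 'S_(m + n) => [ffun j => t (lshift n j)]) predT) //=.
apply: ler_sum => f _; rewrite (eq_bigr (fun=> G f)); last by move=> t /eqP ->.
rewrite sumr_const -[_ *+ _]mulr_natl; apply: ler_wpM2r => //.
by rewrite ler_nat card_perm_lshift_fiber.
Qed.

Lemma prod_1sub_ge (F : realFieldType) (I : finType) (P : pred I) (x : I -> F) :
  (forall i, P i -> 0 <= x i <= 1) ->
  1 - \sum_(i | P i) x i <= \prod_(i | P i) (1 - x i).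
Proof.
move=> x01.
suff [] : 0 <= \sum_(i | P i) x i /\ 1 - \sum_(i | P i) x i <= \prod_(i | P i) (1 - x i)
  by [].
apply: (big_rec2 (fun s p => 0 <= s /\ 1 - s <= p)); first by split; lra.
by move=> i s p /x01 /andP[? ?] [? ?]; split; nra.
Qed.

Section DoublyStochastic.
Variables (F : realFieldType) (n : nat) (A : 'M[F]_n).
Hypothesis dsA : doubly_stochastic A.

Lemma ds_entry_le1 i j : A i j <= 1.
Proof.
have [A_ge0 [rowA _]] := dsA; rewrite -(rowA i) (bigD1 j) //= lerDl.
exact: sumr_ge0.
Qed.

Lemma ds_lms_term_ge i j : A i j ^+ 2 <= A i j * \prod_(k | k != i) (1 - A k j).
Proof.
have [A_ge0 [_ colA]] := dsA.
rewrite expr2 ler_wpM2l //; apply: le_trans (prod_1sub_ge _) => [|k _].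
  by rewrite lerBrDr -(colA j) [leRHS](bigD1 i) //= addrC.
by rewrite A_ge0 ds_entry_le1.
Qed.

End DoublyStochastic.

Lemma sum_mulrn_eq (V : nmodType) n (a : V) (k : 'I_n) : \sum_j a *+ (j == k) = a.
Proof. by rewrite (bigD1 k) //= eqxx big1 ?addr0 // => j /negbTE ->. Qed.

Section Counterexample.
Variables (F : realFieldType) (m : nat).
Hypothesis m_gt0 : (0 < m)%nat.

Definition lms_eps : F := (m + m)%:R^-1.

Definition lms_mx : 'M[F]_(m + m) :=
  row_mx (col_mx 2^-1%:M 2^-1%:M) (const_mx lms_eps).

Lemma lms_mx_rshift i j : lms_mx i (rshift m j) = lms_eps.
Proof. by rewrite row_mxEr mxE. Qed.

Lemma lms_mx_ul i j : lms_mx (lshift m i) (lshift m j) = 2^-1 *+ (i == j).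
Proof. by rewrite row_mxEl col_mxEu mxE. Qed.

Lemma lms_mx_dl i j : lms_mx (rshift m i) (lshift m j) = 2^-1 *+ (i == j).
Proof. by rewrite row_mxEl col_mxEd mxE. Qed.

Lemma natr_mm_neq0 : (m + m)%:R != 0 :> F.
Proof. by rewrite pnatr_eq0 -lt0n addn_gt0 m_gt0. Qed.

Lemma lms_eps_ge0 : 0 <= lms_eps.
Proof. by rewrite invr_ge0 ler0n. Qed.

Lemma lms_eps_le1 : lms_eps <= 1.
Proof. by rewrite invf_le1 ?ler1n ?ltr0n addn_gt0 m_gt0. Qed.

Lemma lms_eps_mulm : lms_eps *+ m = 2^-1.
Proof.
by rewrite /lms_eps -mulr_natr natrD; field; rewrite -natrD natr_mm_neq0.
Qed.

Lemma lms_mx_ge0 i j : 0 <= lms_mx i j.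
Proof.
have [k ->|k ->] := split_ordP j; last by rewrite lms_mx_rshift lms_eps_ge0.
have [l ->|l ->] := split_ordP i; rewrite ?lms_mx_ul ?lms_mx_dl mulrn_wge0 //;
  by rewrite invr_ge0 ler0n.
Qed.

Lemma lms_mx_row i : \sum_j lms_mx i j = 1.
Proof.
rewrite big_split_ord /=.
have -> : \sum_(j < m) lms_mx i (lshift m j) = 2^-1.
  have [k ->|k ->] := split_ordP i;
    under eq_bigr do rewrite ?lms_mx_ul ?lms_mx_dl eq_sym;
    exact: sum_mulrn_eq.
under eq_bigr do rewrite lms_mx_rshift.
rewrite sumr_const card_ord lms_eps_mulm -mulr2n.
by rewrite -[_ *+ 2]mulr_natl mulfV ?pnatr_eq0.
Qed.

Lemma lms_mx_col_lshift j : \sum_i lms_mx i (lshift m j) = 1.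
Proof.
rewrite big_split_ord /=.
under eq_bigr do rewrite lms_mx_ul.
under [X in _ + X]eq_bigr do rewrite lms_mx_dl.
by rewrite sum_mulrn_eq -mulr2n -[_ *+ 2]mulr_natl mulfV ?pnatr_eq0.
Qed.

Lemma lms_mx_col j : \sum_i lms_mx i j = 1.
Proof.
case: (split_ordP j) => k ->; first exact: lms_mx_col_lshift.
under eq_bigr do rewrite lms_mx_rshift.
by rewrite sumr_const card_ord -mulr_natr mulVf // natr_mm_neq0.
Qed.

Lemma lms_mx_ds : doubly_stochastic lms_mx.
Proof. by split; [exact: lms_mx_ge0 | split; [exact: lms_mx_row | exact: lms_mx_col]]. Qed.

Lemma per_lms_mx : per lms_mx <= m`!%:R * lms_eps ^+ m.
Proof.
apply: le_trans (per_le_const_rblock lms_eps_ge0 lms_mx_ge0 lms_mx_rshift) _.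
by rewrite big1 ?mulr1 // => j _; rewrite lms_mx_col_lshift.
Qed.

Lemma lms_mx_row_half i : exists j, lms_mx i (lshift m j) = 2^-1.
Proof.
by have [k ->|k ->] := split_ordP i; exists k; rewrite ?lms_mx_ul ?lms_mx_dl eqxx.
Qed.

Lemma lms_term_ge0 i j : 0 <= lms_mx i j * \prod_(k | k != i) (1 - lms_mx k j).
Proof.
rewrite mulr_ge0 ?lms_mx_ge0 // prodr_ge0 // => k _.
by rewrite subr_ge0 (ds_entry_le1 lms_mx_ds).
Qed.

Lemma lms_mx_row_ge i :
  4^-1 + 2^-1 * (1 - lms_eps) ^+ (m + m)%nat.-1 <=
  \sum_j lms_mx i j * \prod_(k | k != i) (1 - lms_mx k j).
Proof.
rewrite big_split_ord /=; apply: lerD.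
  have [j0 half_j0] := lms_mx_row_half i.
  rewrite (bigD1 j0) //= -[leLHS]addr0 lerD ?sumr_ge0 // => [|j _]; last first.
    exact: lms_term_ge0.
  apply: le_trans (ds_lms_term_ge lms_mx_ds _ _).
  by rewrite half_j0 expr2 -invfM -natrM.
under eq_bigr do under eq_bigr do rewrite lms_mx_rshift.
under eq_bigr do rewrite lms_mx_rshift.
by rewrite sumr_const card_ord prodr_const cardC1 card_ord -mulrnAl lms_eps_mulm.
Qed.

Lemma lms_mx_LMS_ge :
  (4^-1 + 2^-1 * (1 - lms_eps) ^+ (m + m)%nat.-1) ^+ (m + m)%nat <= LMS lms_mx.
Proof.
have prod_constE (x : F) : x ^+ (m + m)%nat = \prod_(i < m + m) x.
  by rewrite prodr_const card_ord.
rewrite /LMS prod_constE; apply: ler_prod => i _; rewrite lms_mx_row_ge andbT.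
by rewrite addr_ge0 ?mulr_ge0 ?exprn_ge0 ?invr_ge0 ?ler0n // subr_ge0 lms_eps_le1.
Qed.

End Counterexample.

(* Numerals in nat are unary, so the large comparisons below are decided in Z. *)
Fixpoint Zfact (n : nat) : Z :=
  if n is k.+1 then (Z.of_nat n * Zfact k)%Z else 1%Z.

Lemma natr_IZR n : n%:R = IZR (Z.of_nat n).
Proof. by rewrite -INRE INR_IZR_INZ. Qed.

Lemma natrX_IZR a k : a%:R ^+ k = IZR (Z.of_nat a ^ Z.of_nat k).
Proof. by rewrite -RpowE natr_IZR pow_IZR. Qed.

Lemma fact_IZR n : n`!%:R = IZR (Zfact n).
Proof. by elim: n => [|n IHn] //; rewrite factS natrM IHn natr_IZR mult_IZR. Qed.

Lemma expr_299_300_ge : 3678%:R / 10000%:R <= (1 - 300%:R^-1) ^+ 299 :> R.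
Proof.
have -> : 1 - 300%:R^-1 = 299%:R / 300%:R :> R by field.
rewrite expr_div_n ler_pdivlMr ?exprn_gt0 ?ltr0n // mulrAC ler_pdivrMr ?ltr0n //.
rewrite !natrX_IZR !natr_IZR -!RmultE -!mult_IZR; apply/RleP/IZR_le.
by apply/Z.leb_le; vm_compute.
Qed.

Lemma fact_150_lt : 150`!%:R * 300%:R^-1 ^+ 150 < (4339%:R / 10000%:R) ^+ 300 :> R.
Proof.
rewrite exprVn expr_div_n ltr_pdivlMr ?exprn_gt0 ?ltr0n //.
rewrite mulrAC ltr_pdivrMr ?exprn_gt0 ?ltr0n //.
rewrite fact_IZR !natrX_IZR -!RmultE -!mult_IZR; apply/RltP/IZR_lt.
by apply/Z.ltb_lt; vm_compute.
Qed.

Lemma lms_gap_150 :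
  150`!%:R * lms_eps R 150 ^+ 150 <
  (4^-1 + 2^-1 * (1 - lms_eps R 150) ^+ 299) ^+ 300.
Proof.
have epsE : lms_eps R 150 = 300%:R^-1 by [].
rewrite epsE; apply: lt_le_trans fact_150_lt _.
have bound_ge0 : 0 <= 4339%:R / 10000%:R :> R by rewrite divr_ge0 ?ler0n.
have bound_le : 4339%:R / 10000%:R <= 4^-1 + 2^-1 * (1 - 300%:R^-1) ^+ 299 :> R.
  have -> : 4339%:R / 10000%:R = 4^-1 + 2^-1 * (3678%:R / 10000%:R) :> R by field.
  by rewrite lerD2l ler_wpM2l ?invr_ge0 ?ler0n ?expr_299_300_ge.
by apply: lerXn2r; rewrite ?nnegrE // (le_trans bound_ge0 bound_le).
Qed.

Theorem mainTheorem15 :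
  exists (N : nat) (A : 'M[R]_N),
    (0 < N)%nat /\ doubly_stochastic A /\ per A < LMS A.
Proof.
have m_gt0 : (0 < 150)%nat by [].
exists (150 + 150)%nat, (lms_mx R 150); split; first by [].
split; first exact: lms_mx_ds.
apply: le_lt_trans (per_lms_mx _ _) _.
exact: lt_le_trans lms_gap_150 (lms_mx_LMS_ge _ m_gt0).
Qed.
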